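(* Suppose $\sigma$ is not surjective and $f\in D[t;\sigma]$ is monic of degree $m\ge2$ and irreducible. Then $S_f$ has no zero divisors and is a right division algebra but not a left division algebra. In particular, $S_f$ is an infinite-dimensional $S_0$-algebra.
   Context: $D$ is an associative division ring and $\sigma$ a ring endomorphism of $D$. $D[t;\sigma]$ is the skew polynomial ring with $ta=\sigma(a)t$. For monic $f$ of degree $m$, $S_f$ is the set of polynomials of degree $<m$ with multiplication $g\circ h=$ remainder of $gh$ upon right division by $f$. $S_0=\{a\in D: a\circ h=h\circ a \text{ for all } h\in S_f\}$, a commutative ring over which $S_f$ is an algebra. $f$ is irreducible if it is not a unit and has no factorization $f=gh$ with $\deg g,\deg h<\deg f$. $S_f$ is a right (resp. left) division algebra if $R_a(x)=x\circ a$ (resp. $L_a(x)=a\circ x$) is bijective for all nonzero $a$. *)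

From HB Require Import structures.
From mathcomp Require Import all_boot all_order all_algebra.
Set Implicit Arguments. Unset Strict Implicit. Unset Printing Implicit Defensive.
Import GRing.Theory.
Local Open Scope ring_scope.

(* Skew polynomials D[t;sigma] are represented by their coefficient
   sequences, i.e. elements of {poly D} (only the additive structure and the
   coefficient/size/lead_coef functions of {poly D} are used); the product is
   the skew product  (a t^i)(b t^j) = a sigma^i(b) t^(i+j). *)

Section Skew.
Variable D : unitRingType.
Variable sigma : {rmorphism D -> D}.

Definition skmul (g h : {poly D}) : {poly D} :=
  \poly_(k < (size g + size h).-1)
     \sum_(i < k.+1) g`_i * iter i (fun x => sigma x) h`_(k - i).

Definition skmonom (c : D) (k : nat) : {poly D} := c *: 'X^k.

(* remainder of g upon right division by (monic) f: repeatedly subtract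
   (lead g) t^(deg g - deg f) f; fuel n bounds the number of steps *)
Fixpoint skrem_fuel (f : {poly D}) (n : nat) (g : {poly D}) : {poly D} :=
  match n with
  | 0 => g
  | n'.+1 =>
      if (size g < size f)%N then g
      else skrem_fuel f n'
             (g - skmul (skmonom (lead_coef g) (size g - size f)%N) f)
  end.

Definition skrem (f g : {poly D}) : {poly D} := skrem_fuel f (size g) g.

Definition sfmul (f g h : {poly D}) : {poly D} := skrem f (skmul g h).

Definition inSf (f g : {poly D}) : Prop := (size g < size f)%N.

Definition inS0 (f : {poly D}) (a : D) : Prop :=
  forall h, inSf f h -> sfmul f a%:P h = sfmul f h a%:P.

Definition sk_unit (g : {poly D}) : Prop :=
  exists h, skmul g h = 1 /\ skmul h g = 1.

Definition sk_irreducible (f : {poly D}) : Prop :=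
  ~ sk_unit f /\
  ~ (exists g h, f = skmul g h /\ (size g < size f)%N /\ (size h < size f)%N).

Definition bij_on (P : {poly D} -> Prop) (F : {poly D} -> {poly D}) : Prop :=
  (forall x, P x -> P (F x)) /\
  (forall x y, P x -> P y -> F x = F y -> x = y) /\
  (forall y, P y -> exists x, P x /\ F x = y).

Definition no_zero_divisors (f : {poly D}) : Prop :=
  forall g h, inSf f g -> inSf f h -> sfmul f g h = 0 -> g = 0 \/ h = 0.

Definition right_division (f : {poly D}) : Prop :=
  forall a, inSf f a -> a != 0 -> bij_on (inSf f) (fun x => sfmul f x a).

Definition left_division (f : {poly D}) : Prop :=
  forall a, inSf f a -> a != 0 -> bij_on (inSf f) (fun x => sfmul f a x).

(* S_f is infinite-dimensional over S_0 (scalar action a.x = a o x):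
   no finite family of elements of S_f spans S_f over S_0 *)
Definition infinite_dim_over_S0 (f : {poly D}) : Prop :=
  forall (n : nat) (s : 'I_n -> {poly D}), (forall i, inSf f (s i)) ->
    exists x, inSf f x /\
      forall c : 'I_n -> D, (forall i, inS0 f (c i)) ->
        x <> \sum_(i < n) sfmul f (c i)%:P (s i).

End Skew.

From HB Require Import structures.
From mathcomp Require Import all_boot all_order all_algebra.
From mathcomp Require Import zify.
From Stdlib Require Import Classical.
Set Implicit Arguments. Unset Strict Implicit. Unset Printing Implicit Defensive.
Import GRing.Theory.
Local Open Scope ring_scope.

(* Since the leading coefficients are units, degrees add in D[t;sigma], so right division
   by a nonzero polynomial works and every left ideal is principal.  For h <> 0 of degree
   < m, the generator of D[t]h + D[t]f right-divides f and h; irreducibility of f forces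
   it to be a constant, hence a h + b f = 1.  If moreover g h is a left multiple of f with
   0 <> g of degree < m, then y = (y a) h + (y b) f, and reducing y a modulo g shows that
   x |-> x o h maps the polynomials of degree < deg g onto S_f, which is impossible by
   counting dimensions over D.  So S_f has no zero divisors, and every R_a is an injective
   D-linear endomorphism of the m-dimensional space S_f, hence bijective.  The map L_t is
   not onto: t o x = b t forces b = sigma(x_0), unless t right-divides f.  Finally S_0 is
   fixed by sigma, and sigma is linear over its fixed division ring, so a finite spanning
   set of S_f over S_0 would make sigma an injective endomorphism of a finite-dimensional
   space, hence surjective. *)

(* [size p] may occur with different but convertible coefficient types, which
   [lia] would treat as unrelated atoms: generalize every size first. *)
Ltac size_lia :=
  repeat match goal with H : context [size _] |- _ => revert H end;
  repeat match goal with |- context [size ?p] =>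
    let n := fresh "n" in move: (size p) => n end;
  intros; lia.

Section SkewPolynomialRing.
Variable D : unitRingType.
Variable sigma : {rmorphism D -> D}.
Local Notation sigma_iter i := (iter i (fun x => sigma x)).
Local Notation "g ** h" := (skmul sigma g h) (at level 40, left associativity).

Lemma iter_sigma0 i : sigma_iter i 0 = 0.
Proof. by elim: i => //= i ->; rewrite rmorph0. Qed.

Lemma iter_sigma1 i : sigma_iter i 1 = 1.
Proof. by elim: i => //= i ->; rewrite rmorph1. Qed.

Lemma iter_sigmaD i a b : sigma_iter i (a + b) = sigma_iter i a + sigma_iter i b.
Proof. by elim: i => //= i ->; rewrite rmorphD. Qed.

Lemma iter_sigmaM i a b : sigma_iter i (a * b) = sigma_iter i a * sigma_iter i b.
Proof. by elim: i => //= i ->; rewrite rmorphM. Qed.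

Lemma coef_skmul g h k : (g ** h)`_k = \sum_(i < k.+1) g`_i * sigma_iter i h`_(k - i).
Proof.
rewrite /skmul coef_poly; case: ifP => // /negbT; rewrite -leqNgt => hk.
symmetry; apply: big1 => i _; case: (ltnP i (size g)) => hi.
  by rewrite (@nth_default _ _ h) ?iter_sigma0 ?mulr0 //; lia.
by rewrite nth_default // mul0r.
Qed.

Lemma skmul0l h : 0 ** h = 0.
Proof. by apply/polyP => k; rewrite coef_skmul coef0 big1 // => i _; rewrite coef0 mul0r. Qed.

Lemma skmul0r g : g ** 0 = 0.
Proof.
by apply/polyP => k; rewrite coef_skmul coef0 big1 // => i _; rewrite coef0 iter_sigma0 mulr0.
Qed.

Lemma skmulDl g g' h : (g + g') ** h = g ** h + g' ** h.
Proof.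
apply/polyP => k; rewrite coefD !coef_skmul -big_split /=.
by apply: eq_bigr => i _; rewrite coefD mulrDl.
Qed.

Lemma skmulDr g h h' : g ** (h + h') = g ** h + g ** h'.
Proof.
apply/polyP => k; rewrite coefD !coef_skmul -big_split /=.
by apply: eq_bigr => i _; rewrite coefD iter_sigmaD mulrDr.
Qed.

Lemma skmulZl c g h : (c *: g) ** h = c *: (g ** h).
Proof.
apply/polyP => k; rewrite coefZ !coef_skmul mulr_sumr.
by apply: eq_bigr => i _; rewrite coefZ mulrA.
Qed.

Lemma skmulNl g h : (- g) ** h = - (g ** h).
Proof. by rewrite -scaleN1r skmulZl scaleN1r. Qed.

Lemma skmulBl g g' h : (g - g') ** h = g ** h - g' ** h.
Proof. by rewrite skmulDl skmulNl. Qed.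

Lemma skmul_suml I (r : seq I) (F : I -> {poly D}) h :
  (\sum_(i <- r) F i) ** h = \sum_(i <- r) F i ** h.
Proof. exact: (big_morph (skmul sigma ^~ h) (fun x y => skmulDl x y h) (skmul0l h)). Qed.

Lemma skmul_sumr I (r : seq I) (F : I -> {poly D}) g :
  g ** (\sum_(i <- r) F i) = \sum_(i <- r) g ** F i.
Proof. exact: (big_morph (skmul sigma g) (skmulDr g) (skmul0r g)). Qed.

Lemma coef_skmulXnl c k h n :
  (c *: 'X^k ** h)`_n = if (k <= n)%N then c * sigma_iter k h`_(n - k) else 0.
Proof.
rewrite coef_skmul; case: leqP => hk.
  rewrite (bigD1 (Ordinal (hk : (k < n.+1)%N))) //= big1 ?addr0.
    by rewrite coefZ coefXn eqxx mulr1.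
  move=> i /eqP hi; rewrite coefZ coefXn.
  have -> : (i == k :> nat) = false by apply/eqP => e; apply: hi; apply: val_inj.
  by rewrite mulr0 mul0r.
apply: big1 => i _; rewrite coefZ coefXn.
have -> : (i == k :> nat) = false by apply/eqP => e; have := ltn_ord i; lia.
by rewrite mulr0 mul0r.
Qed.

Lemma coef_skmulXnr c k g n :
  (g ** (c *: 'X^k))`_n = if (k <= n)%N then g`_(n - k) * sigma_iter (n - k) c else 0.
Proof.
rewrite coef_skmul; case: leqP => hk.
  have hnk : (n - k < n.+1)%N by lia.
  rewrite (bigD1 (Ordinal hnk)) //= big1 ?addr0.
    by rewrite coefZ coefXn subKn // eqxx mulr1.
  move=> i /eqP hi; rewrite coefZ coefXn.
  have -> : (n - i == k)%N = false.
    by apply/eqP => e; apply: hi; apply: val_inj => /=; have := ltn_ord i; lia.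
  by rewrite mulr0 iter_sigma0 mulr0.
apply: big1 => i _; rewrite coefZ coefXn.
have -> : (n - i == k)%N = false by apply/eqP => e; have := ltn_ord i; lia.
by rewrite mulr0 iter_sigma0 mulr0.
Qed.

Lemma skmul_monomials a i b j :
  a *: 'X^i ** (b *: 'X^j) = (a * sigma_iter i b) *: 'X^(i + j).
Proof.
apply/polyP => n; rewrite coef_skmulXnl !coefZ !coefXn.
case: leqP => h; last by rewrite (_ : (n == i + j)%N = false) ?mulr0 //; apply/eqP; lia.
have -> : (n - i == j)%N = (n == i + j)%N by apply/idP/idP => /eqP ?; apply/eqP; lia.
by case: eqP; rewrite ?mulr1 // !mulr0 iter_sigma0 mulr0.
Qed.

Lemma skmulA : associative (skmul sigma).
Proof.
have monomial_expand (p : {poly D}) : p = \sum_(i < size p) p`_i *: 'X^i.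
  by rewrite -poly_def coefK.
move=> a b c; rewrite (monomial_expand a) !skmul_suml; apply: eq_bigr => i _.
rewrite (monomial_expand b) skmul_sumr !skmul_suml skmul_sumr; apply: eq_bigr => j _.
rewrite (monomial_expand c) !skmul_sumr; apply: eq_bigr => k _.
by rewrite !skmul_monomials iter_sigmaM -iterD mulrA addnA.
Qed.

Lemma skmulCl c p : c%:P ** p = c *: p.
Proof.
have -> : c%:P = c *: 'X^0 by rewrite expr0 alg_polyC.
by apply/polyP => n; rewrite coef_skmulXnl coefZ subn0.
Qed.

Lemma skmul1l p : 1 ** p = p.
Proof. by rewrite -polyC1 skmulCl scale1r. Qed.

Lemma skmul1r p : p ** 1 = p.
Proof.
have -> : (1 : {poly D}) = 1 *: 'X^0 by rewrite expr0 scale1r.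
by apply/polyP => n; rewrite coef_skmulXnr subn0 iter_sigma1 mulr1.
Qed.

Lemma skmulXr p : p ** 'X = p * 'X.
Proof.
apply/polyP => n; rewrite coefMX.
have -> : ('X : {poly D}) = 1 *: 'X^1 by rewrite scale1r expr1.
rewrite coef_skmulXnr iter_sigma1 mulr1.
by case: n => [|n] //; rewrite subn1.
Qed.

Lemma skmulXl p : 'X ** p = map_poly sigma p * 'X.
Proof.
apply/polyP => n; rewrite coefMX.
have -> : ('X : {poly D}) = 1 *: 'X^1 by rewrite scale1r expr1.
rewrite coef_skmulXnl mul1r.
by case: n => [|n] //=; rewrite coef_map subn1.
Qed.

End SkewPolynomialRing.

Section SkewDivision.
Variable D : unitRingType.
Hypothesis unitD : forall x : D, x != 0 -> x \is a GRing.unit.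
Variable sigma : {rmorphism D -> D}.
Local Notation sigma_iter i := (iter i (fun x => sigma x)).
Local Notation "g ** h" := (skmul sigma g h) (at level 40, left associativity).

Lemma mulf_neq0_div (a b : D) : a != 0 -> b != 0 -> a * b != 0.
Proof.
move=> a0; apply: contra => /eqP ab0.
by rewrite -(mulKr (unitD a0) b) ab0 mulr0.
Qed.

Lemma sigma_neq0 a : a != 0 -> sigma a != 0.
Proof.
move=> a0; apply/eqP => sa0.
by have := rmorph_unit sigma (unitD a0); rewrite sa0 unitr0.
Qed.

Lemma iter_sigma_neq0 i a : a != 0 -> sigma_iter i a != 0.
Proof. by elim: i => //= i IH /IH /sigma_neq0. Qed.

Lemma sigma_inj : injective sigma.
Proof.
move=> x y exy; apply/eqP; rewrite -subr_eq0; apply/negPn/negP => /sigma_neq0.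
by rewrite rmorphB exy subrr eqxx.
Qed.

Lemma size_skmul g h : g != 0 -> h != 0 -> size (g ** h) = (size g + size h).-1.
Proof.
rewrite -!size_poly_gt0 => g0 h0.
have [K eK] : {K | K = (size g + size h).-2} by exists (size g + size h).-2.
have lead_gh : (g ** h)`_K = lead_coef g * sigma_iter (size g).-1 (lead_coef h).
  have lt_gK : ((size g).-1 < K.+1)%N by size_lia.
  rewrite coef_skmul (bigD1 (Ordinal lt_gK)) //= big1 ?addr0.
    by rewrite lead_coefE (_ : K - _ = (size h).-1)%N //; size_lia.
  move=> i /eqP ni; have {}ni : i <> (size g).-1 :> nat by move=> e; apply: ni; apply: val_inj.
  case: (ltnP i (size g).-1) => hi.
    by rewrite (@nth_default _ _ h) ?iter_sigma0 ?mulr0 //; size_lia.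
  by rewrite nth_default ?mul0r //; size_lia.
have nzK : (g ** h)`_K != 0.
  by rewrite lead_gh mulf_neq0_div ?iter_sigma_neq0 // lead_coef_eq0 -size_poly_gt0.
apply/anti_leq/andP; split; first exact: size_poly.
rewrite (_ : (size g + size h).-1 = K.+1); last by size_lia.
by rewrite ltnNge; apply: contra nzK => /(nth_default 0) ->.
Qed.

Lemma size_skmul_cancel_lead (a d : {poly D}) (c : D) : (0 < size d <= size a)%N ->
  c * sigma_iter (size a - size d) (lead_coef d) = lead_coef a ->
  (size (a - c *: 'X^(size a - size d)%N ** d)%R < size a)%N.
Proof.
move=> /andP[d0 da] hc.
suff : (size (a - c *: 'X^(size a - size d)%N ** d)%R <= (size a).-1)%N by size_lia.
apply/leq_sizeP => j hj; rewrite coefB coef_skmulXnl ifT; last by size_lia.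
case: (ltngtP j (size a).-1) => hj'; first by size_lia.
  by rewrite !nth_default ?iter_sigma0 ?mulr0 ?subrr //; size_lia.
rewrite hj' -lead_coefE (_ : (size a).-1 - (size a - size d) = (size d).-1)%N; last by size_lia.
by rewrite -lead_coefE hc subrr.
Qed.

Lemma skew_division (d a : {poly D}) : d != 0 -> exists q r, a = q ** d + r /\ (size r < size d)%N.
Proof.
move=> d0; have [n] := ubnP (size a); elim: n a => // n IH a ha.
case: (ltnP (size a) (size d)) => hs; first by exists 0, a; rewrite skmul0l add0r.
have ld : lead_coef d != 0 by rewrite lead_coef_eq0.
set k := (size a - size d)%N.
set c := lead_coef a * (sigma_iter k (lead_coef d))^-1.
have hc : c * sigma_iter k (lead_coef d) = lead_coef a.
  by rewrite /c mulrVK // unitD // iter_sigma_neq0.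
have := @size_skmul_cancel_lead a d c; rewrite -/k size_poly_gt0 d0 hs => /(_ isT hc) lt_a.
have [q [r [e hr]]] := IH _ (leq_trans lt_a (ltnSE ha)).
exists (c *: 'X^k + q), r; split => //.
by rewrite skmulDl -addrA -e addrC subrK.
Qed.

Lemma skew_left_ideal_principal (I : {poly D} -> Prop) :
  (forall z e q, I z -> I e -> I (z - q ** e)) -> forall e, I e -> e != 0 ->
  exists g, [/\ I g, g != 0 & forall z, I z -> exists u, z = u ** g].
Proof.
move=> closed e; have [n] := ubnP (size e); elim: n e => // n IH e size_e Ie e0.
have [[r [Ir r0 lt_re]]|no_smaller] :=
  classic (exists r, [/\ I r, r != 0 & (size r < size e)%N]).
  by apply: (IH r) => //; size_lia.
exists e; split=> // z Iz; have [q [r [ez lt_re]]] := skew_division z e0.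
exists q; have [r0|r0] := eqVneq r 0; first by rewrite ez r0 addr0.
case: no_smaller; exists r; split=> //.
have -> : r = z - q ** e by rewrite ez [q ** e + r]addrC addrK.
exact: closed.
Qed.

Variable f : {poly D}.
Hypothesis monic_f : f \is monic.

Lemma skrem_fuel_spec n (g : {poly D}) : (size g <= n)%N ->
  exists q, g = q ** f + skrem_fuel sigma f n g /\ (size (skrem_fuel sigma f n g) < size f)%N.
Proof.
have f0 : (0 < size f)%N by rewrite size_poly_gt0 monic_neq0.
elim: n g => [|n IH] g hg /=; first by exists 0; rewrite skmul0l add0r; split => //; size_lia.
case: ltnP => hs; first by exists 0; rewrite skmul0l add0r.
have hc : lead_coef g * sigma_iter (size g - size f) (lead_coef f) = lead_coef g.
  by rewrite (monicP monic_f) iter_sigma1 mulr1.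
have := @size_skmul_cancel_lead g f _ _ hc; rewrite f0 hs => /(_ isT) lt_g.
have [q [e hr]] := IH _ (leq_trans lt_g hg).
exists (skmonom (lead_coef g) (size g - size f) + q); split => //.
by rewrite skmulDl -addrA -e /skmonom addrC subrK.
Qed.

Lemma skrem_spec (g : {poly D}) :
  exists q, g = q ** f + skrem sigma f g /\ (size (skrem sigma f g) < size f)%N.
Proof. exact: skrem_fuel_spec. Qed.

Lemma size_skrem (g : {poly D}) : (size (skrem sigma f g) < size f)%N.
Proof. by have [q []] := skrem_spec g. Qed.

Lemma skrem_uniq (g q r : {poly D}) : g = q ** f + r -> (size r < size f)%N -> skrem sigma f g = r.
Proof.
move=> e hr; have [q' [e' _]] := skrem_spec g.
have E : (q - q') ** f = skrem sigma f g - r.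
  rewrite skmulBl (_ : q ** f = g - r); last by rewrite e addrK.
  rewrite (_ : q' ** f = g - skrem sigma f g); last by rewrite [X in X - _]e' addrK.
  by rewrite opprB addrC addrA subrK.
have [qq0|qq0] := eqVneq (q - q') 0.
  by apply/eqP; rewrite -subr_eq0 -E qq0 skmul0l.
have := size_skmul qq0 (monic_neq0 monic_f); rewrite E.
have := size_polyD (skrem sigma f g) (- r); rewrite size_polyN.
have := size_skrem g; move: qq0; rewrite -size_poly_gt0; size_lia.
Qed.

Lemma skrem_small (g : {poly D}) : (size g < size f)%N -> skrem sigma f g = g.
Proof. by move=> gf; apply: (@skrem_uniq g 0) => //; rewrite skmul0l add0r. Qed.

Lemma skrem_linear : linear (skrem sigma f).
Proof.
move=> a x y; have [q [ex _]] := skrem_spec x; have [q' [ey _]] := skrem_spec y.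
apply: (@skrem_uniq _ (a *: q + q')).
  rewrite skmulDl skmulZl {1}ex {1}ey scalerDr.
  by rewrite addrACA.
apply: leq_ltn_trans (size_polyD _ _) _.
by have := size_skrem x; have := size_skrem y; have := size_scale_leq a (skrem sigma f x); size_lia.
Qed.

Lemma skrem_eq0 (g : {poly D}) : skrem sigma f g = 0 <-> exists q, g = q ** f.
Proof.
split=> [g0|[q ->]]; last first.
  by apply: (@skrem_uniq _ q); rewrite ?addr0 ?size_poly0 ?size_poly_gt0 ?monic_neq0.
by have [q [eg _]] := skrem_spec g; exists q; rewrite {1}eg g0 addr0.
Qed.

End SkewDivision.

Lemma predT_divring_closed (R : unitRingType) : divring_closed (@predT R).
Proof. by []. Qed.

HB.instance Definition _ (R : unitRingType) :=
  GRing.isDivringClosed.Build R predT (predT_divring_closed R).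

Section LinearDependence.
Variable D : unitRingType.
Hypothesis unitD : forall x : D, x != 0 -> x \is a GRing.unit.
Variable K : divringClosed D.

Lemma dependent_polys n (p : 'I_n.+1 -> {poly D}) :
  (forall i, size (p i) <= n)%N -> (forall i j, (p i)`_j \in K) ->
  exists lam : 'I_n.+1 -> D,
    [/\ forall i, lam i \in K, exists i, lam i != 0 & \sum_i lam i *: p i = 0].
Proof.
elim: n p => [|n IH] p size_p pK.
  exists (fun _ => 1); split=> [i|| ]; first exact: rpred1.
    by exists ord0; rewrite oner_neq0.
  by apply: big1 => i _; move: (size_p i); rewrite leqn0 size_poly_eq0 => /eqP ->; rewrite scaler0.
pose k := odflt ord_max [pick i | (p i)`_n != 0].
pose a := (p k)`_n.
have a_pivot i : (p i)`_n != 0 -> a != 0.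
  by move=> nz; rewrite /a /k; case: pickP => [? ->|no_pivot] //; move: (no_pivot i); rewrite nz.
pose c j := (p (lift k j))`_n / a.
have cK j : c j \in K by rewrite /c rpredM ?rpredV ?pK.
(* If [a = 0] there is no pivot at all, so [c j = 0] and [w j] has size [<= n] anyway. *)
pose w j := p (lift k j) - c j *: p k.
have size_w j : (size (w j) <= n)%N.
  apply/leq_sizeP => i; rewrite leq_eqVlt => /predU1P[<-|lt_i].
    rewrite coefB coefZ /c /a; have [a0|a0] := eqVneq (p k)`_n 0.
      have -> : (p (lift k j))`_n = 0.
        by apply/eqP/negPn/negP => /a_pivot; rewrite /a a0 eqxx.
      by rewrite !mul0r subrr.
    by rewrite mulrVK ?unitD ?subrr.
  rewrite coefB coefZ !nth_default ?mulr0 ?subrr //.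
    by move: (size_p k); size_lia.
  by move: (size_p (lift k j)); size_lia.
have wK j i : (w j)`_i \in K.
  by rewrite /w coefB coefZ; exact: rpredB (pK _ _) (rpredM (cK j) (pK _ _)).
have [mu [muK [j0 mu_j0] sum_mu]] := IH w size_w wK.
pose S := \sum_j mu j * c j.
exists (fun i => if unlift k i is Some j then mu j else - S); split.
- move=> i; case: unlift => [j|]; first exact: muK.
  by rewrite rpredN rpred_sum // => j _; rewrite rpredM.
- by exists (lift k j0); rewrite liftK.
rewrite (bigD1_ord k) //= unlift_none.
under eq_bigr do rewrite liftK.
rewrite -[RHS]sum_mu /w; under [in RHS]eq_bigr do rewrite scalerBr scalerA.
by rewrite sumrB -scaler_suml scaleNr addrC.
Qed.

Lemma dependent_polys_recr n (p : 'I_n -> {poly D}) (y : {poly D}) :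
  (forall i, size (p i) <= n)%N -> (size y <= n)%N ->
  (forall i j, (p i)`_j \in K) -> (forall j, y`_j \in K) ->
  exists lam mu, [/\ forall i, lam i \in K, mu \in K,
    mu != 0 \/ exists i, lam i != 0 & \sum_i lam i *: p i + mu *: y = 0].
Proof.
move=> size_p size_y pK yK.
pose q i := if unlift ord_max i is Some j then p j else y.
have [|i|lam [lamK [i0 lam_i0] sum_lam]] := @dependent_polys n q.
- by move=> i; rewrite /q; case: unlift.
- by rewrite /q; case: unlift.
exists (fun i => lam (lift ord_max i)), (lam ord_max); split => //.
  by move: lam_i0; case: (unliftP ord_max i0) => [j ->|->]; [right; exists j | left].
move: sum_lam; rewrite (bigD1_ord ord_max) //= addrC /q unlift_none.
by under eq_bigr do rewrite liftK.
Qed.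

End LinearDependence.

Lemma coef_sum_scaleXn (R : nzSemiRingType) k (lam : 'I_k -> R) (i : 'I_k) :
  (\sum_(j < k) lam j *: 'X^j)`_i = lam i.
Proof.
rewrite coef_sum (bigD1 i) //= coefZ coefXn eqxx mulr1 big1 ?addr0 // => j ji.
by rewrite coefZ coefXn (_ : (i == j :> nat) = false) ?mulr0 //; apply/negbTE; rewrite eq_sym.
Qed.

Lemma size_sum_scaleXn (R : nzSemiRingType) k (lam : 'I_k -> R) :
  (size (\sum_(j < k) lam j *: 'X^j)%R <= k)%N.
Proof.
apply/leq_sizeP => i ki; rewrite coef_sum big1 // => j _.
by rewrite coefZ coefXn (_ : (i == j :> nat) = false) ?mulr0 //; apply/eqP; have := ltn_ord j; lia.
Qed.

Section LinearMapsOnPolys.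
Variable D : unitRingType.
Hypothesis unitD : forall x : D, x != 0 -> x \is a GRing.unit.
Variable Phi : {linear {poly D} -> {poly D}}.

Lemma injective_linear_surj n :
  (forall x : {poly D}, size x <= n -> size (Phi x) <= n)%N ->
  (forall x : {poly D}, (size x <= n)%N -> Phi x = 0 -> x = 0) ->
  forall y : {poly D}, (size y <= n)%N ->
  exists2 x : {poly D}, (size x <= n)%N & Phi x = y.
Proof.
move=> Phi_size Phi_inj y size_y.
have size_PhiXn (j : 'I_n) : (size (Phi 'X^j) <= n)%N by apply: Phi_size; rewrite size_polyXn.
have [lam [mu [_ _ nontriv sum0]]] :=
  @dependent_polys_recr D unitD predT n _ y size_PhiXn size_y (fun _ _ => isT) (fun _ => isT).
pose u := \sum_(j < n) lam j *: 'X^j.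
have Phi_u : Phi u = \sum_j lam j *: Phi 'X^j.
  by rewrite linear_sum; under eq_bigr do rewrite linearZ.
have [mu0|mu0] := eqVneq mu 0.
  move: sum0; rewrite mu0 scale0r addr0 -Phi_u => /(Phi_inj _ (size_sum_scaleXn lam)) u0.
  exfalso; case: nontriv => [|[i]]; first by rewrite mu0 eqxx.
  by rewrite -(coef_sum_scaleXn lam) u0 coef0 eqxx.
exists (- mu^-1 *: u); first by rewrite (leq_trans (size_scale_leq _ _)) ?size_sum_scaleXn.
rewrite linearZ /= Phi_u; move/eqP: sum0; rewrite addr_eq0 => /eqP ->.
by rewrite scalerN scaleNr opprK scalerA mulVr ?unitD // scale1r.
Qed.

Lemma linear_onto_size_leq k n :
  (forall y : {poly D}, size y <= n -> exists2 x : {poly D}, size x <= k & Phi x = y)%N ->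
  (n <= k)%N.
Proof.
move=> onto; rewrite leqNgt; apply/negP => lt_kn.
have onto_Xn (j : 'I_k.+1) : exists2 x : {poly D}, (size x <= k)%N & Phi x = 'X^j.
  by apply: onto; rewrite size_polyXn; have := ltn_ord j; lia.
have [p size_p Phi_p] := fin_all_exists2 onto_Xn.
have [lam [_ [i0 lam_i0] sum0]] := @dependent_polys D unitD predT k p size_p (fun _ _ => isT).
move: sum0 => /(congr1 Phi); rewrite linear_sum linear0.
under eq_bigr do rewrite linearZ Phi_p.
move/(congr1 (fun q : {poly D} => q`_i0)); rewrite coef_sum_scaleXn coef0 => /eqP.
by rewrite (negPf lam_i0).
Qed.

End LinearMapsOnPolys.

Definition spans (D : pzRingType) (K : {pred D}) n (e : 'I_n -> D) :=
  forall d : D, exists2 c : 'I_n -> D, (forall i, c i \in K) & d = \sum_i c i * e i.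

Definition sigma_fixed (D : unitRingType) (sigma : {rmorphism D -> D}) : {pred D} :=
  [pred x | sigma x == x].

Lemma sigma_fixed_divring_closed (D : unitRingType) (sigma : {rmorphism D -> D}) :
  divring_closed (sigma_fixed sigma).
Proof.
have fixV x : sigma x = x -> sigma x^-1 = x^-1.
  by move=> sx; have [ux|/invr_out->//] := boolP (x \is a GRing.unit); rewrite rmorphV // sx.
split; first by rewrite inE rmorph1.
  by move=> x y /eqP sx /eqP sy; rewrite inE rmorphB sx sy.
by move=> x y /eqP sx /eqP/fixV sy; rewrite inE rmorphM sx sy.
Qed.

HB.instance Definition _ (D : unitRingType) (sigma : {rmorphism D -> D}) :=
  GRing.isDivringClosed.Build D (sigma_fixed sigma) (sigma_fixed_divring_closed sigma).

Section FiniteSpan.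
Variable D : unitRingType.
Hypothesis unitD : forall x : D, x != 0 -> x \is a GRing.unit.
Variable sigma : {rmorphism D -> D}.
Variable K : divringClosed D.
Hypothesis sigmaK : {in K, forall c, sigma c = c}.

Lemma spans_drop n (e lam : 'I_n.+1 -> D) k : spans K e ->
  (forall i, lam i \in K) -> lam k != 0 -> \sum_i lam i * e i = 0 ->
  spans K (fun j => e (lift k j)).
Proof.
move=> span lamK lam_k sum0 d; have [c cK ->] := span d.
have ek : e k = - \sum_j (lam k)^-1 * lam (lift k j) * e (lift k j).
  move/eqP: sum0; rewrite (bigD1_ord k) //= addr_eq0 => /eqP sum_k.
  rewrite -[e k](mulKr (unitD lam_k)) sum_k mulrN mulr_sumr.
  by congr (- _); apply: eq_bigr => j _; rewrite mulrA.
exists (fun j => c (lift k j) - c k * (lam k)^-1 * lam (lift k j)).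
  by move=> j; rewrite rpredB ?rpredM ?rpredV ?cK ?lamK.
rewrite (bigD1_ord k) //= ek mulrN mulr_sumr -sumrN -big_split /=.
by apply: eq_bigr => j _; rewrite mulrBl !mulrA addrC.
Qed.

Lemma sigma_lincomb n (c e : 'I_n -> D) :
  (forall i, c i \in K) -> sigma (\sum_i c i * e i) = \sum_i c i * sigma (e i).
Proof. by move=> cK; rewrite rmorph_sum; apply: eq_bigr => i _; rewrite rmorphM sigmaK. Qed.

Definition lincomb n (e : 'I_n -> D) (p : {poly D}) := \sum_(i < n) p`_i * e i.

Lemma lincomb_is_linear n (e : 'I_n -> D) a p q :
  lincomb e (a *: p + q) = a * lincomb e p + lincomb e q.
Proof.
rewrite /lincomb mulr_sumr -big_split /=.
by apply: eq_bigr => i _; rewrite coefD coefZ mulrDl mulrA.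
Qed.

Lemma lincomb_sum n (e : 'I_n -> D) m (lam : 'I_m -> D) (p : 'I_m -> {poly D}) :
  lincomb e (\sum_j lam j *: p j) = \sum_j lam j * lincomb e (p j).
Proof.
elim/big_rec2: _ => [|j x q _ <-]; last by rewrite lincomb_is_linear.
by rewrite /lincomb big1 // => i _; rewrite coef0 mul0r.
Qed.

Lemma lincomb_coords n (e c : 'I_n -> D) :
  lincomb e (\sum_(i < n) c i *: 'X^i) = \sum_i c i * e i.
Proof. by apply: eq_bigr => i _; rewrite coef_sum_scaleXn. Qed.

Lemma coords_in n (c : 'I_n -> D) j : (forall i, c i \in K) -> (\sum_(i < n) c i *: 'X^i)`_j \in K.
Proof.
move=> cK; rewrite coef_sum rpred_sum // => i _.
by rewrite coefZ coefXn; case: eqP; rewrite ?mulr1 ?mulr0 ?rpred0.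
Qed.

Lemma spans_sigma_surj n (e : 'I_n -> D) : spans K e -> forall y, exists x, sigma x = y.
Proof.
elim: n e => [|n IH] e span y.
  by have [c _] := span 1; rewrite big_ord0 => /eqP; rewrite oner_eq0.
(* Coordinates with respect to [e] are encoded as the polynomials [\sum_i c i *: 'X^i]. *)
have [c cK ec] := fin_all_exists2 (fun j => span (sigma (e j))).
have [cy cyK ->] := span y.
have [lam [mu [lamK muK nontriv sum0]]] := dependent_polys_recr unitD
  (fun j => size_sum_scaleXn (c j)) (size_sum_scaleXn cy)
  (fun j i => coords_in i (cK j)) (fun i => coords_in i cyK).
have rel : sigma (\sum_j lam j * e j) + mu * \sum_i cy i * e i = 0.
  rewrite sigma_lincomb // -(lincomb_coords e cy).
  have -> : \sum_j lam j * sigma (e j) = \sum_j lam j * lincomb e (\sum_i c j i *: 'X^i).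
    by apply: eq_bigr => j _; rewrite lincomb_coords ec.
  rewrite -lincomb_sum addrC -lincomb_is_linear addrC sum0.
  by rewrite /lincomb big1 // => i _; rewrite coef0 mul0r.
have [mu0|mu0] := eqVneq mu 0.
  have sum_lam : \sum_j lam j * e j = 0.
    by apply: (sigma_inj unitD); rewrite rmorph0 -[RHS]rel mu0 mul0r addr0.
  case: nontriv => [|[k lam_k]]; first by rewrite mu0 eqxx.
  exact: IH _ (spans_drop span lamK lam_k sum_lam) _.
exists (- mu^-1 * \sum_j lam j * e j).
have muVK : mu^-1 \in K by rewrite rpredV.
rewrite rmorphM rmorphN (sigmaK muVK); move/eqP: rel; rewrite addr_eq0 => /eqP ->.
by rewrite mulrN mulNr opprK mulKr ?unitD.
Qed.

End FiniteSpan.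

Section PetitAlgebra.
Variable D : unitRingType.
Hypothesis unitD : forall x : D, x != 0 -> x \is a GRing.unit.
Variable sigma : {rmorphism D -> D}.
Variable f : {poly D}.
Hypothesis monic_f : f \is monic.
Local Notation "g ** h" := (skmul sigma g h) (at level 40, left associativity).

Definition sfmulr (h x : {poly D}) := sfmul sigma f x h.

Lemma sfmulr_is_linear h : linear (sfmulr h).
Proof.
by move=> a x y; rewrite /sfmulr /sfmul skmulDl skmulZl (skrem_linear unitD sigma monic_f).
Qed.

HB.instance Definition _ h :=
  GRing.isLinear.Build D {poly D} {poly D} *:%R (sfmulr h) (sfmulr_is_linear h).

Lemma sfmulCl c (x : {poly D}) : (size x < size f)%N -> sfmul sigma f c%:P x = c *: x.
Proof.
move=> lt_xf; rewrite /sfmul skmulCl (skrem_small unitD sigma monic_f) //.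
exact: leq_ltn_trans (size_scale_leq _ _) lt_xf.
Qed.

Lemma irreducible_bezout (h : {poly D}) : sk_irreducible sigma f -> h != 0 -> (size h < size f)%N ->
  exists a b, a ** h + b ** f = 1.
Proof.
move=> [_ irr] h0 lt_hf.
pose I z := exists a b, z = a ** h + b ** f.
have closed z e q : I z -> I e -> I (z - q ** e).
  move=> [a [b ->]] [a' [b' ->]]; exists (a - q ** a'), (b - q ** b').
  by rewrite skmulDr !skmulBl -!skmulA opprD addrACA.
have Ih : I h by exists 1, 0; rewrite skmul1l skmul0l addr0.
have If : I f by exists 0, 1; rewrite skmul1l skmul0l add0r.
have [g [[a [b eg]] g0 gen]] := skew_left_ideal_principal unitD closed Ih h0.
have [[u ef] [v eh]] := (gen f If, gen h Ih).
have u0 : u != 0 by apply: contra_neq (monic_neq0 monic_f) => u0; rewrite ef u0 skmul0l.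
have v0 : v != 0 by apply: contra_neq h0 => v0; rewrite eh v0 skmul0l.
have size_g : (size g <= 1)%N.
  rewrite leqNgt; apply/negP => lt1g; apply: irr; exists u, g; rewrite -ef.
  move: (size_skmul unitD sigma u0 g0) (size_skmul unitD sigma v0 g0); rewrite -ef -eh.
  move: v0 lt_hf; rewrite -size_poly_gt0 => v0 lt_hf sf sh.
  by split=> //; split; size_lia.
move: g0 eg; rewrite (size1_polyC size_g) polyC_eq0 => c0 eg.
exists ((g`_0)^-1%:P ** a), ((g`_0)^-1%:P ** b).
by rewrite -!skmulA -skmulDr -eg skmulCl scale_polyC mulVr ?unitD.
Qed.

Lemma sfmul_onto_of_bezout (h g : {poly D}) : (exists a b, a ** h + b ** f = 1) ->
  g != 0 -> skrem sigma f (g ** h) = 0 ->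
  forall y : {poly D}, (size y < size f)%N ->
  exists2 x : {poly D}, (size x < size g)%N & sfmul sigma f x h = y.
Proof.
move=> [a [b bez]] g0 /(skrem_eq0 unitD sigma monic_f) [c ghf] y lt_yf.
have [q [r [ya lt_rg]]] := skew_division unitD sigma (y ** a) g0.
set Q := q ** c + y ** b.
have ey : y = r ** h + Q ** f.
  rewrite -[y in LHS](skmul1r sigma) -bez skmulDr !skmulA ya skmulDl -skmulA ghf.
  by rewrite skmulDl skmulA addrCA addrA.
exists r => //; apply: (skrem_uniq unitD (sigma := sigma) monic_f (q := - Q)) => //.
by rewrite skmulNl addrC {1}ey addrK.
Qed.

Lemma inSfE (x : {poly D}) : inSf f x = (size x <= (size f).-1)%N.
Proof.
rewrite /inSf; move: (monic_neq0 monic_f); rewrite -size_poly_gt0.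
by case: (size f) => // n; rewrite ltnS.
Qed.

Lemma irreducible_no_zero_divisors : sk_irreducible sigma f -> no_zero_divisors sigma f.
Proof.
move=> irr g h g_in h_in gh0.
have [g0|g0] := eqVneq g 0; [by left | have [h0|h0] := eqVneq h 0; [by right | exfalso]].
have onto := sfmul_onto_of_bezout (irreducible_bezout irr h0 h_in) g0 gh0.
suff : ((size f).-1 <= (size g).-1)%N by move: g0 g_in; rewrite /inSf -size_poly_gt0; size_lia.
apply: (@linear_onto_size_leq D unitD (sfmulr h)) => y; rewrite -inSfE => /onto[x lt_xg <-].
by exists x => //; size_lia.
Qed.

Lemma irreducible_right_division : sk_irreducible sigma f -> right_division sigma f.
Proof.
move=> irr a a_in a0.
have inj x : inSf f x -> sfmulr a x = 0 -> x = 0.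
  move=> x_in /(irreducible_no_zero_divisors irr x_in a_in) [//|a00].
  by move: a0; rewrite a00 eqxx.
have maps_in x : inSf f (sfmulr a x) by rewrite /inSf /sfmulr /sfmul size_skrem.
split; [|split] => [x _|x y x_in y_in exy|y]; first exact: maps_in.
  apply/eqP; rewrite -subr_eq0; apply/eqP/inj; last by rewrite linearB /= /sfmulr exy subrr.
  by rewrite /inSf (leq_ltn_trans (size_polyD _ _)) // size_polyN gtn_max x_in y_in.
rewrite inSfE => y_in.
have [x _|x|x x_in <-] := injective_linear_surj unitD (Phi := sfmulr a) _ _ y_in.
- by rewrite -inSfE; apply: maps_in.
- by rewrite -inSfE; exact: inj.
- by exists x; rewrite inSfE.
Qed.

Lemma inS0_sigma_fixed c : (2 < size f)%N -> inS0 sigma f c -> sigma c = c.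
Proof.
move=> f2 /(_ 'X); rewrite /inSf size_polyX => /(_ f2).
rewrite sfmulCl ?size_polyX // /sfmul skmulXl map_polyC (skrem_small unitD sigma monic_f).
  by move/(congr1 (fun p : {poly D} => p`_1)); rewrite coefZ coefX mulr1 coefMX coefC.
rewrite (leq_ltn_trans (size_mul_leq _ _)) // size_polyX.
by move: (size_polyC_leq1 (sigma c)); size_lia.
Qed.

Lemma not_surj_infinite_dim : (2 < size f)%N ->
  ~ (forall y, exists x, sigma x = y) -> infinite_dim_over_S0 sigma f.
Proof.
move=> f2 not_surj n s s_in; apply: NNPP => no_x; apply: not_surj.
apply: (@spans_sigma_surj D unitD sigma (sigma_fixed sigma) _ n (fun i => (s i)`_0)).
  by move=> c /eqP.
move=> d; apply: NNPP => no_c; apply: no_x; exists d%:P; split=> [|c cS0 ed].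
  by rewrite /inSf (leq_ltn_trans (size_polyC_leq1 d)) //; size_lia.
apply: no_c; exists c => [i|]; first by rewrite inE (inS0_sigma_fixed f2 (cS0 i)).
move/(congr1 (fun p : {poly D} => p`_0)): ed; rewrite coefC eqxx coef_sum => ->.
by apply: eq_bigr => i _; rewrite sfmulCl ?coefZ //; apply: s_in.
Qed.

Lemma irreducible_coef0_neq0 : sk_irreducible sigma f -> (2 < size f)%N -> f`_0 != 0.
Proof.
move=> [_ irr] f2; apply/eqP => f00; apply: irr.
exists (drop_poly 1 f), 'X; rewrite size_drop_poly size_polyX; split; last by size_lia.
rewrite skmulXr -[LHS](poly_take_drop 1) (_ : take_poly 1 f = 0) ?add0r //.
by apply/polyP => i; rewrite coef_take_poly coef0; case: i => [|i] //=.
Qed.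

Lemma size_leq1_of_skmul q : (size (q ** f) <= size f)%N -> (size q <= 1)%N.
Proof.
have [->|q0] := eqVneq q 0; first by rewrite size_poly0.
rewrite (size_skmul unitD sigma q0 (monic_neq0 monic_f)).
by move: q0 (monic_neq0 monic_f); rewrite -!size_poly_gt0; size_lia.
Qed.

Lemma irreducible_not_left_division : sk_irreducible sigma f -> (2 < size f)%N ->
  ~ (forall y, exists x, sigma x = y) -> ~ left_division sigma f.
Proof.
move=> irr f2 not_surj ldiv.
have [b /not_ex_all_not b_notin] := not_all_ex_not _ _ not_surj.
have X_in : inSf f 'X by rewrite /inSf size_polyX.
have bX_in : inSf f (b *: 'X) by rewrite /inSf (leq_ltn_trans (size_scale_leq _ _)) ?size_polyX.
have [_ [_ /(_ _ bX_in) [x [x_in Xx]]]] := ldiv 'X X_in (negbT (polyX_eq0 _)).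
have [q [eXx _]] := skrem_spec sigma monic_f ('X ** x).
rewrite [skrem _ _ _]Xx skmulXl in eXx.
have size_q : (size q <= 1)%N.
  apply: size_leq1_of_skmul; rewrite (_ : q ** f = map_poly sigma x * 'X - b *: 'X).
    have := size_polyD (map_poly sigma x * 'X) (- (b *: 'X)).
    have := size_mul_leq (map_poly sigma x) 'X; have := size_scale_leq b 'X.
    rewrite size_polyN size_polyX size_map_inj_poly ?rmorph0 //; last exact: sigma_inj.
    by move: x_in; rewrite /inSf; size_lia.
  by rewrite eXx addrK.
move: eXx; rewrite (size1_polyC size_q) skmulCl => eXx.
have := congr1 (fun p : {poly D} => p`_1) eXx; have := congr1 (fun p : {poly D} => p`_0) eXx.
rewrite /= !coefMX !coefD !coefZ !coefX coef_map /= mulr0 mulr1 !addr0 => at0 at1.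
have [q00|q00] := eqVneq q`_0 0.
  by apply: (b_notin x`_0); rewrite at1 q00 mul0r add0r.
move: (irreducible_coef0_neq0 irr f2).
by rewrite -(mulKr (unitD q00) f`_0) -at0 mulr0 eqxx.
Qed.

End PetitAlgebra.

Theorem mainTheorem8 (D : unitRingType)
  (hD : forall x : D, x != 0 -> x \is a GRing.unit)
  (sigma : {rmorphism D -> D})
  (hsig : ~ (forall y : D, exists x : D, sigma x = y))
  (f : {poly D}) (m : nat)
  (hmon : lead_coef f = 1) (hsize : size f = m.+1) (hm : (2 <= m)%N)
  (hirr : sk_irreducible sigma f) :
  no_zero_divisors sigma f /\ right_division sigma f /\
  ~ left_division sigma f /\ infinite_dim_over_S0 sigma f.
Proof.
have monic_f : f \is monic by apply/monicP.
have size_f : (2 < size f)%N by rewrite hsize.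
split; first exact: irreducible_no_zero_divisors.
split; first exact: irreducible_right_division.
split; first exact: irreducible_not_left_division.
exact: not_surj_infinite_dim.
Qed.
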